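(* Let $n\ge1$, let $a_1,\dots,a_n$ be distinct real numbers and $F(a)=\prod_{i=1}^n(a-a_i)$. Fix $\epsilon_i\in\{\pm1\}$, put $\Delta_i=\epsilon_i(a-a_i)$ and work on an open interval where all $\Delta_i>0$. For arbitrary real $\xi_1,\dots,\xi_n$, the function $x=\sum_{i=1}^n\xi_i\Delta_i^{-1/2}$ satisfies $$\mathrm{Op}_n[F]\,x=\sum_{i=1}^n\xi_i\frac{\Delta_i^{1/2}}{n!}\,D_a^n\Big(\frac{F}{\Delta_i}\Big),$$ which vanishes; consequently $x=\sum_{i}\xi_i\Delta_i^{-1/2}$ is the general solution of the ODE $\mathrm{Op}_n[F]x=0$.
   Context: $D_a=d/da$, $F^{(m)}=D_a^mF$; Pochhammer symbol $(z)_0=1$, $(z)_s=z(z+1)\cdots(z+s-1)$; $\mathrm{Op}_n[F]=\sum_{s=0}^n\frac{F^{(n-s)}}{(n-s)!}\frac{1}{(1/2)_s}D_a^s$. *)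

From Stdlib Require Import Reals Lra Lia.
From Coquelicot Require Import Coquelicot.
Open Scope R_scope.

Fixpoint rsum (n : nat) (f : nat -> R) : R :=
  match n with O => 0 | S m => rsum m f + f m end.

Fixpoint rprod (n : nat) (f : nat -> R) : R :=
  match n with O => 1 | S m => rprod m f * f m end.

Fixpoint poch (z : R) (s : nat) : R :=
  match s with O => 1 | S m => poch z m * (z + INR m) end.

(* F(a) = prod_{i=1}^n (a - a_i), with the a_i indexed 0..n-1 *)
Definition Fpoly (n : nat) (a : nat -> R) (t : R) : R :=
  rprod n (fun i => t - a i).

Definition Dlt (eps a : nat -> R) (i : nat) (t : R) : R :=
  eps i * (t - a i).

Definition Op (n : nat) (F x : R -> R) (t : R) : R :=
  rsum (S n) (fun s =>
    Derive_n F (n - s) t / INR (Factorial.fact (n - s)) * / poch (1/2) s * Derive_n x s t).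

Definition in_ival (l r : Rbar) (t : R) : Prop := Rbar_lt l t /\ Rbar_lt t r.

(* The s-th derivative of Delta_i^(-1/2) is (1/2)_s w^s Delta_i^(-1/2) with
   w = 1/(a_i - a), so Op_n[F] maps it to Delta_i^(-1/2) w^n times the Taylor
   expansion of F at a evaluated at a_i, which is F(a_i) = 0. On the right-hand side,
   F/Delta_i is a polynomial of degree n-1, so its n-th derivative vanishes.
   Conversely, the leading coefficient F/(1/2)_n of Op_n[F] does not vanish on the
   interval, so a solution is determined by its first n derivatives at a point t0:
   the energy E = sum_{s<n} (z^(s))^2 of the difference z of two solutions satisfies
   |E'| <= K E, and Gronwall gives E = 0. The n initial values are matched by the n
   basis functions because their derivatives at t0 form a Vandermonde system in the
   distinct nodes 1/(a_i - t0). *)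

From Stdlib Require Import Reals Lra Lia.
From Coquelicot Require Import Coquelicot.
Open Scope R_scope.

(** * Finite sums and products *)

Lemma rsum_ext n f g : (forall i, (i < n)%nat -> f i = g i) -> rsum n f = rsum n g.
Proof.
  induction n as [|n IH]; intros Hfg; simpl; [reflexivity|].
  rewrite IH, Hfg by (try intros; try apply Hfg; lia); reflexivity.
Qed.

Lemma rsum_plus n f g : rsum n (fun i => f i + g i) = rsum n f + rsum n g.
Proof. induction n as [|n IH]; simpl; [|rewrite IH]; ring. Qed.

Lemma rsum_scal n c f : rsum n (fun i => c * f i) = c * rsum n f.
Proof. induction n as [|n IH]; simpl; [|rewrite IH]; ring. Qed.

Lemma rsum_const n c : rsum n (fun _ => c) = INR n * c.
Proof. induction n as [|n IH]; simpl rsum; [simpl; ring|]. rewrite IH, S_INR; ring. Qed.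

Lemma rsum_zero n f : (forall i, (i < n)%nat -> f i = 0) -> rsum n f = 0.
Proof. intros Hf. rewrite (rsum_ext n f (fun _ => 0)), rsum_const by exact Hf. ring. Qed.

Lemma rsum_shift n f : rsum (S n) f = f 0%nat + rsum n (fun k => f (S k)).
Proof. induction n as [|n IH]; simpl in *; [|rewrite IH]; ring. Qed.

Lemma rsum_rev n f : rsum (S n) f = rsum (S n) (fun s => f (n - s)%nat).
Proof.
  induction n as [|n IH]; [reflexivity|].
  rewrite (rsum_shift (S n) (fun s => f (S n - s)%nat)).
  change (rsum (S (S n)) f) with (rsum (S n) f + f (S n)).
  rewrite IH, Nat.sub_0_r; simpl (S n - S _)%nat. ring.
Qed.

Lemma rsum_swap n m (f : nat -> nat -> R) :
  rsum n (fun s => rsum m (fun i => f s i)) = rsum m (fun i => rsum n (fun s => f s i)).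
Proof.
  induction n as [|n IH]; simpl.
  - symmetry; apply rsum_zero; reflexivity.
  - rewrite IH, <- rsum_plus; reflexivity.
Qed.

Lemma rsum_mult_rsum n m (c : nat -> R) (xi : nat -> R) (g : nat -> nat -> R) :
  rsum n (fun s => c s * rsum m (fun i => xi i * g i s))
  = rsum m (fun i => xi i * rsum n (fun s => c s * g i s)).
Proof.
  transitivity (rsum n (fun s => rsum m (fun i => xi i * (c s * g i s)))).
  - apply rsum_ext; intros s _; rewrite <- rsum_scal; apply rsum_ext; intros; ring.
  - rewrite rsum_swap; apply rsum_ext; intros i _; apply rsum_scal.
Qed.

Lemma rsum_le n f g : (forall i, (i < n)%nat -> f i <= g i) -> rsum n f <= rsum n g.
Proof.
  induction n as [|n IH]; intros Hfg; simpl; [lra|].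
  apply Rplus_le_compat; [apply IH; intros; apply Hfg|apply Hfg]; lia.
Qed.

Lemma rsum_nonneg n f : (forall i, (i < n)%nat -> 0 <= f i) -> 0 <= rsum n f.
Proof. intros Hf. rewrite <- (Rmult_0_r (INR n)), <- rsum_const. now apply rsum_le. Qed.

Lemma rsum_ge_term n f j : (forall i, (i < n)%nat -> 0 <= f i) -> (j < n)%nat -> f j <= rsum n f.
Proof.
  induction n as [|n IH]; intros Hf Hj; simpl; [lia|].
  destruct (Nat.eq_dec j n) as [->|Hjn].
  - assert (0 <= rsum n f) by (apply rsum_nonneg; intros; apply Hf; lia). lra.
  - assert (f j <= rsum n f) by (apply IH; [intros; apply Hf|]; lia).
    assert (0 <= f n) by (apply Hf; lia). lra.
Qed.

Lemma rsum_abs n f : Rabs (rsum n f) <= rsum n (fun i => Rabs (f i)).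
Proof.
  induction n as [|n IH]; simpl; [rewrite Rabs_R0; lra|].
  eapply Rle_trans; [apply Rabs_triang|lra].
Qed.

Lemma rsum_sum_f_R0 n f : rsum (S n) f = sum_f_R0 f n.
Proof. induction n as [|n IH]; simpl in *; [ring|rewrite <- IH; reflexivity]. Qed.

Lemma rprod_ext n f g : (forall i, (i < n)%nat -> f i = g i) -> rprod n f = rprod n g.
Proof.
  induction n as [|n IH]; intros Hfg; simpl; [reflexivity|].
  rewrite IH, Hfg by (try intros; try apply Hfg; lia); reflexivity.
Qed.

Lemma rprod_neq0 n f : (forall i, (i < n)%nat -> f i <> 0) -> rprod n f <> 0.
Proof.
  induction n as [|n IH]; intros Hf; simpl; [lra|].
  apply Rmult_integral_contrapositive; split; [apply IH; intros|]; apply Hf; lia.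
Qed.

Lemma rprod_eq0 n f j : (j < n)%nat -> f j = 0 -> rprod n f = 0.
Proof.
  induction n as [|n IH]; intros Hj Hf; simpl; [lia|].
  destruct (Nat.eq_dec j n) as [->|Hjn]; [rewrite Hf|rewrite IH by (auto; lia)]; ring.
Qed.

Lemma rprod_extract n f i : (i < n)%nat ->
  rprod n f = rprod n (fun j => if Nat.eqb j i then 1 else f j) * f i.
Proof.
  induction n as [|n IH]; intros Hi; simpl; [lia|].
  destruct (Nat.eq_dec i n) as [->|Hin].
  - rewrite Nat.eqb_refl, (rprod_ext n (fun j => if Nat.eqb j n then 1 else f j) f); [ring|].
    intros j Hj; destruct (Nat.eqb_spec j n); [lia|reflexivity].
  - rewrite IH by lia; destruct (Nat.eqb_spec n i); [lia|ring].
Qed.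

Lemma is_derive_rsum n (f : nat -> R -> R) df t :
  (forall i, (i < n)%nat -> is_derive (f i) t (df i)) ->
  is_derive (fun u => rsum n (fun i => f i u)) t (rsum n df).
Proof.
  induction n as [|n IH]; intros Hf; simpl.
  - apply (is_derive_const 0).
  - apply (@is_derive_plus R_AbsRing R_NormedModule (fun u => rsum n (fun i => f i u)) (f n));
      [apply IH; intros|]; apply Hf; lia.
Qed.

Lemma continuous_rsum n (f : nat -> R -> R) t :
  (forall i, (i < n)%nat -> continuous (f i) t) ->
  continuous (fun u => rsum n (fun i => f i u)) t.
Proof.
  induction n as [|n IH]; intros Hf; simpl.
  - apply continuous_const.
  - apply (@continuous_plus R_UniformSpace R_AbsRing R_NormedModule
      (fun u => rsum n (fun i => f i u)) (f n)); [apply IH; intros|]; apply Hf; lia.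
Qed.

(** * Polynomial functions and Taylor expansion *)

Definition smooth (f : R -> R) : Prop := forall k t, ex_derive_n f k t.

Definition deg_le (d : nat) (f : R -> R) : Prop :=
  smooth f /\ forall k t, (d < k)%nat -> Derive_n f k t = 0.

Lemma smooth_is_derive f k t : smooth f -> is_derive (Derive_n f k) t (Derive_n f (S k) t).
Proof. intros Hf. apply Derive_correct, (Hf (S k)). Qed.

Lemma Derive_n_mul_affine f al be k t : smooth f ->
  Derive_n (fun u => f u * (al * u + be)) k t
  = Derive_n f k t * (al * t + be) + INR k * al * Derive_n f (pred k) t.
Proof.
  intros Hf; revert t; induction k as [|k IH]; intros t; [simpl; ring|].
  simpl Derive_n at 1; rewrite (Derive_ext _ _ t IH).
  apply is_derive_unique.
  assert (Hk := smooth_is_derive f k t Hf).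
  destruct k as [|k]; simpl pred.
  - auto_derive; [repeat split; eexists; eassumption|].
    cbn [Derive_n INR]; ring.
  - assert (Hk' := smooth_is_derive f k t Hf).
    auto_derive; [repeat split; eexists; eassumption|].
    change (match k with 0%nat => 1 | S _ => INR k + 1 end) with (INR (S k)).
    change (Derive (fun x => Derive_n f k x) t) with (Derive (Derive_n f k) t).
    cbn [Derive_n]; rewrite !S_INR; ring.
Qed.

Lemma smooth_mul_affine f al be : smooth f -> smooth (fun u => f u * (al * u + be)).
Proof.
  intros Hf [|k] t; [exact I|].
  apply (ex_derive_ext (fun u => Derive_n f k u * (al * u + be) + INR k * al * Derive_n f (pred k) u)).
  - intros u; symmetry; apply Derive_n_mul_affine, Hf.
  - auto_derive; repeat split; apply (Hf (S _)).
Qed.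

Lemma deg_le_ext d f g : (forall u, f u = g u) -> deg_le d f -> deg_le d g.
Proof.
  intros Hfg [Hf Hd]; split.
  - intros k t; apply (ex_derive_n_ext f g k t Hfg), Hf.
  - intros k t Hk; rewrite <- (Derive_n_ext f g k t Hfg); now apply Hd.
Qed.

Lemma deg_le_const c : deg_le 0 (fun _ => c).
Proof.
  split; [intros k t; apply ex_derive_n_const|].
  intros [|k] t Hk; [lia|apply Derive_n_const].
Qed.

Lemma deg_le_mul_affine d f al be :
  deg_le d f -> deg_le (S d) (fun u => f u * (al * u + be)).
Proof.
  intros [Hf Hd]; split; [now apply smooth_mul_affine|].
  intros k t Hk; rewrite Derive_n_mul_affine by exact Hf.
  rewrite !Hd by lia; ring.
Qed.

Lemma Fpoly_deg n a : deg_le n (Fpoly n a).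
Proof.
  induction n as [|n IH]; [exact (deg_le_const 1)|].
  apply (deg_le_ext _ (fun u => Fpoly n a u * (1 * u + - a n))); [|now apply deg_le_mul_affine].
  intros u; unfold Fpoly; simpl; ring.
Qed.

Definition Fpoly_drop (n : nat) (a : nat -> R) (i : nat) (t : R) : R :=
  rprod n (fun j => if Nat.eqb j i then 1 else t - a j).

Lemma Fpoly_extract n a i t : (i < n)%nat -> Fpoly n a t = Fpoly_drop n a i t * (t - a i).
Proof. intros Hi; exact (rprod_extract n (fun j => t - a j) i Hi). Qed.

Lemma Fpoly_drop_deg n a i : (i < n)%nat -> deg_le (pred n) (Fpoly_drop n a i).
Proof.
  induction n as [|n IH]; intros Hi; [lia|simpl pred].
  destruct (Nat.eq_dec i n) as [->|Hin].
  - apply (deg_le_ext _ (Fpoly n a)); [|apply Fpoly_deg].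
    intros u; unfold Fpoly_drop, Fpoly; simpl; rewrite Nat.eqb_refl, Rmult_1_r.
    apply rprod_ext; intros j Hj; destruct (Nat.eqb_spec j n); [lia|reflexivity].
  - apply (deg_le_ext _ (fun u => Fpoly_drop n a i u * (1 * u + - a n))).
    + intros u; unfold Fpoly_drop; simpl; destruct (Nat.eqb_spec n i); [lia|ring].
    + destruct n as [|n]; [lia|].
      apply deg_le_mul_affine, IH; lia.
Qed.

Lemma deg_le_taylor_pos d f t h : deg_le d f -> 0 < h ->
  f (t + h) = rsum (S d) (fun k => Derive_n f k t / INR (Factorial.fact k) * h ^ k).
Proof.
  intros [Hf Hd] Hh.
  destruct (Taylor_Lagrange f d t (t + h)) as [z [_ ->]]; [lra|intros; apply Hf|].
  rewrite (Hd (S d)), rsum_sum_f_R0 by lia.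
  replace (t + h - t) with h by ring.
  rewrite Rmult_0_r, Rplus_0_r; apply sum_eq; intros k _; field; apply INR_fact_neq_0.
Qed.

Lemma deg_le_comp_opp d f : deg_le d f -> deg_le d (fun u => f (- u)).
Proof.
  intros [Hf Hd]; split.
  - intros k t; apply ex_derive_n_comp_opp, filter_forall; intros; apply Hf.
  - intros k t Hk; rewrite Derive_n_comp_opp, Hd by (try apply filter_forall; intros; try apply Hf; lia).
    ring.
Qed.

Lemma deg_le_taylor d f t h : deg_le d f ->
  f (t + h) = rsum (S d) (fun k => Derive_n f k t / INR (Factorial.fact k) * h ^ k).
Proof.
  intros Hdf.
  destruct (total_order_T 0 h) as [[Hh|<-]|Hh]; [now apply deg_le_taylor_pos| |].
  - rewrite Rplus_0_r, rsum_shift, rsum_zero by (intros; simpl; ring).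
    simpl; field.
  - rewrite <- (Ropp_involutive (t + h)), Ropp_plus_distr.
    rewrite (deg_le_taylor_pos d _ (- t) (- h) (deg_le_comp_opp d f Hdf)) by lra.
    apply rsum_ext; intros k _.
    rewrite Derive_n_comp_opp, Ropp_involutive by (apply filter_forall; intros; apply Hdf).
    replace (- h) with (-1 * h) by ring.
    rewrite Rpow_mult_distr.
    assert (Hsign : (-1) ^ k * (-1) ^ k = 1)
      by (rewrite <- Rpow_mult_distr, <- (pow1 k); f_equal; ring).
    set (sg := (-1) ^ k) in *; set (hk := h ^ k).
    rewrite <- (Rmult_1_r (Derive_n f k t / _ * hk)), <- Hsign; unfold Rdiv; ring.
Qed.

Lemma deg_le_taylor_rev d f t h : deg_le d f -> h <> 0 ->
  rsum (S d) (fun s => Derive_n f (d - s) t / INR (Factorial.fact (d - s)) * (/ h) ^ s)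
  = (/ h) ^ d * f (t + h).
Proof.
  intros Hdf Hh.
  rewrite (deg_le_taylor d f t h Hdf), <- rsum_scal, rsum_rev.
  apply rsum_ext; intros s Hs.
  replace (d - (d - s))%nat with s by lia.
  rewrite <- (Nat.sub_add s d) at 2 by lia.
  rewrite pow_add, !pow_inv.
  assert (Hhs : h ^ s <> 0) by now apply pow_nonzero.
  assert (Hhds : h ^ (d - s) <> 0) by now apply pow_nonzero.
  set (hs := h ^ s) in *; set (hds := h ^ (d - s)) in *.
  field; auto using INR_fact_neq_0.
Qed.

(** * The operator on the basis functions *)

Lemma poch_half_pos s : 0 < poch (1/2) s.
Proof.
  induction s as [|s IH]; simpl; [lra|].
  apply Rmult_lt_0_compat; [exact IH|pose proof (pos_INR s); lra].
Qed.

(* The [s]-th derivative of [u |-> (e * (u - c)) ^ (-1/2)]; the sign [e] drops out of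
   the factors [- e / (e * (u - c)) = / (c - u)] produced by each differentiation. *)
Definition isqrt_deriv (e c : R) (s : nat) (u : R) : R :=
  poch (1/2) s * (/ (c - u)) ^ s / sqrt (e * (u - c)).

Lemma is_derive_isqrt_deriv e c s u : 0 < e * (u - c) ->
  is_derive (isqrt_deriv e c s) u (isqrt_deriv e c (S s) u).
Proof.
  intros Hpos.
  assert (Hcu : c - u <> 0) by (intros H; replace u with c in Hpos by lra; lra).
  assert (Hsq : 0 < sqrt (e * (u - c))) by now apply sqrt_lt_R0.
  assert (He : e <> 0) by (intros ->; lra).
  unfold isqrt_deriv; auto_derive.
  { replace (c + - u) with (c - u) by ring; replace (u + - c) with (u - c) by ring. lra. }
  replace (c + - u) with (c - u) by ring; replace (u + - c) with (u - c) by ring.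
  rewrite sqrt_sqrt by lra.
  set (q := sqrt (e * (u - c))) in *.
  replace (e * (u - c)) with (- e * (c - u)) by ring.
  set (x := c - u) in *.
  assert (Hpred : INR s * (/ x) ^ pred s = INR s * (/ x) ^ s * x)
    by (destruct s; simpl; [ring|field; exact Hcu]).
  rewrite Hpred.
  change (poch (1/2) (S s)) with (poch (1/2) s * (1/2 + INR s)).
  rewrite <- tech_pow_Rmult.
  set (w := (/ x) ^ s); field; lra.
Qed.

Definition Op_coef (n : nat) (F : R -> R) (s : nat) (t : R) : R :=
  Derive_n F (n - s) t / INR (Factorial.fact (n - s)) * / poch (1/2) s.

Lemma OpE n F x t : Op n F x t = rsum (S n) (fun s => Op_coef n F s t * Derive_n x s t).
Proof. reflexivity. Qed.

Lemma continuous_Op_coef n F s t : smooth F -> continuous (Op_coef n F s) t.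
Proof.
  intros HF; apply (@ex_derive_continuous R_AbsRing R_NormedModule); unfold Op_coef.
  auto_derive; apply (HF (S _)).
Qed.

(* Taylor-expanding [F] around [t] evaluates the sum at the root [a i] of [F]. *)
Lemma Op_coef_Fpoly_isqrt n a i e t : (i < n)%nat -> 0 < e * (t - a i) ->
  rsum (S n) (fun s => Op_coef n (Fpoly n a) s t * isqrt_deriv e (a i) s t) = 0.
Proof.
  intros Hi Hpos.
  assert (Hh : a i - t <> 0) by (intros H; replace t with (a i) in Hpos by lra; lra).
  assert (Hsq : 0 < sqrt (e * (t - a i))) by now apply sqrt_lt_R0.
  rewrite (rsum_ext _ _ (fun s => / sqrt (e * (t - a i)) *
    (Derive_n (Fpoly n a) (n - s) t / INR (Factorial.fact (n - s)) * (/ (a i - t)) ^ s))).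
  - rewrite rsum_scal, (deg_le_taylor_rev n _ t _ (Fpoly_deg n a) Hh).
    replace (t + (a i - t)) with (a i) by ring.
    unfold Fpoly; rewrite (rprod_eq0 n _ i Hi) by ring; ring.
  - intros s _; unfold Op_coef, isqrt_deriv.
    assert (Hp := poch_half_pos s).
    set (w := (/ (a i - t)) ^ s); field; split; [apply INR_fact_neq_0|lra].
Qed.

(** * Uniqueness for linear ODEs with nonvanishing leading coefficient *)

Lemma in_ival_locally l r t : in_ival l r t -> locally t (in_ival l r).
Proof.
  intros [Hl Hr]; apply filter_and.
  - exact (open_Rbar_gt' (Finite t) l Hl).
  - exact (open_Rbar_lt' (Finite t) r Hr).
Qed.

Lemma in_ival_between l r x y c : in_ival l r x -> in_ival l r y -> x <= c <= y -> in_ival l r c.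
Proof.
  intros [Hl _] [_ Hr] [Hxc Hcy]; split.
  - exact (Rbar_lt_le_trans l x c Hl Hxc).
  - exact (Rbar_le_lt_trans c y r Hcy Hr).
Qed.

Lemma in_ival_inhabited l r : Rbar_lt l r -> exists t, in_ival l r t.
Proof.
  destruct l as [x| |], r as [y| |]; simpl; intros H; try tauto.
  - exists ((x + y) / 2); split; simpl; lra.
  - exists (x + 1); split; simpl; [lra|exact I].
  - exists (y - 1); split; simpl; [exact I|lra].
  - exists 0; split; exact I.
Qed.

Lemma is_derive_nonneg_le (f f' : R -> R) x y : x <= y ->
  (forall c, x <= c <= y -> is_derive f c (f' c)) ->
  (forall c, x <= c <= y -> 0 <= f' c) -> f x <= f y.
Proof.
  intros Hxy Hd Hpos.
  assert (Hseg : forall c, Rmin x y <= c <= Rmax x y -> x <= c <= y)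
    by (rewrite Rmin_left, Rmax_right by exact Hxy; tauto).
  destruct (MVT_gen f x y f') as [c [Hc Heq]].
  - intros c Hc; apply Hd, Hseg; lra.
  - intros c Hc; apply continuity_pt_filterlim, (@ex_derive_continuous R_AbsRing R_NormedModule).
    exists (f' c); apply Hd, Hseg, Hc.
  - assert (0 <= f' c * (y - x)) by (apply Rmult_le_pos; [apply Hpos, Hseg, Hc|lra]).
    lra.
Qed.

Lemma is_derive_mul_exp (E : R -> R) E' q c : is_derive E c E' ->
  is_derive (fun u => E u * exp (q * u)) c ((E' + q * E c) * exp (q * c)).
Proof.
  intros HE; auto_derive; [exists E'; exact HE|].
  change (Derive (fun x => E x) c) with (Derive E c).
  rewrite (is_derive_unique _ _ _ HE); ring.
Qed.

(* On the segment between [t0] and [t], [K] is bounded by some [L]; the weight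
   [exp (-+ L u)] then makes [E] monotone away from its zero [t0]. *)
Lemma Gronwall_zero l r (E E' K : R -> R) t0 :
  in_ival l r t0 -> E t0 = 0 ->
  (forall t, in_ival l r t -> 0 <= E t) ->
  (forall t, in_ival l r t -> is_derive E t (E' t)) ->
  (forall t, in_ival l r t -> continuous K t) ->
  (forall t, in_ival l r t -> Rabs (E' t) <= K t * E t) ->
  forall t, in_ival l r t -> E t = 0.
Proof.
  intros Ht0 HE0 Hnonneg Hder HK Hbound t Ht.
  assert (Hseg : forall c, Rmin t0 t <= c <= Rmax t0 t -> in_ival l r c).
  { intros c; apply in_ival_between; [apply Rmin_case|apply Rmax_case]; assumption. }
  destruct (continuity_ab_maj K (Rmin t0 t) (Rmax t0 t)) as [m [HKm _]].
  { apply (Rle_trans _ t0); [apply Rmin_l|apply Rmax_l]. }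
  { intros c Hc; apply continuity_pt_filterlim, HK, Hseg, Hc. }
  set (L := K m) in HKm.
  assert (HL : forall c, Rmin t0 t <= c <= Rmax t0 t -> Rabs (E' c) <= L * E c).
  { intros c Hc; apply (Rle_trans _ _ _ (Hbound c (Hseg c Hc))).
    apply Rmult_le_compat_r; [apply Hnonneg, Hseg|apply HKm]; exact Hc. }
  assert (Hexp := exp_pos (- L * t)); assert (Hexp' := exp_pos (L * t)).
  assert (HEt := Hnonneg t Ht).
  destruct (Rle_dec t0 t) as [Hle|Hlt].
  - rewrite Rmin_left, Rmax_right in * by exact Hle.
    assert (- (E t0 * exp (- L * t0)) <= - (E t * exp (- L * t))).
    { apply (is_derive_nonneg_le (fun u => - (E u * exp (- L * u)))
        (fun c => - ((E' c + - L * E c) * exp (- L * c)))); [exact Hle| |].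
      - intros c Hc; apply (is_derive_opp (fun u => E u * exp (- L * u))).
        apply is_derive_mul_exp, Hder, Hseg, Hc.
      - intros c Hc; assert (Hc' := HL c Hc); apply Rabs_le_between in Hc'.
        assert (0 < exp (- L * c)) by apply exp_pos; nra. }
    rewrite HE0 in *; nra.
  - rewrite Rmin_right, Rmax_left in * by lra.
    assert (E t * exp (L * t) <= E t0 * exp (L * t0)).
    { apply (is_derive_nonneg_le (fun u => E u * exp (L * u))
        (fun c => (E' c + L * E c) * exp (L * c))); [lra| |].
      - intros c Hc; apply is_derive_mul_exp, Hder, Hseg, Hc.
      - intros c Hc; assert (Hc' := HL c Hc); apply Rabs_le_between in Hc'.
        assert (0 < exp (L * c)) by apply exp_pos; nra. }
    rewrite HE0 in *; nra.
Qed.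

Section CompanionSystem.

Variables (n : nat) (l r : Rbar) (A z : nat -> R -> R) (t0 : R).
Hypothesis HA : forall s t, (s <= n)%nat -> in_ival l r t -> continuous (A s) t.
Hypothesis HAn : forall t, in_ival l r t -> A n t <> 0.
Hypothesis Hz : forall s t, (s < n)%nat -> in_ival l r t -> is_derive (z s) t (z (S s) t).
Hypothesis Hode : forall t, in_ival l r t -> rsum (S n) (fun s => A s t * z s t) = 0.

Let energy t := rsum n (fun s => z s t ^ 2).
Let energy' t := rsum n (fun s => 2 * z s t * z (S s) t).
Let ratio t := rsum n (fun s => Rabs (A s t / A n t)).

Lemma energy_nonneg t : 0 <= energy t.
Proof. apply rsum_nonneg; intros; apply pow2_ge_0. Qed.

Lemma is_derive_energy t : in_ival l r t -> is_derive energy t (energy' t).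
Proof.
  intros Ht; apply (is_derive_rsum n (fun s u => z s u ^ 2)); intros s Hs.
  auto_derive; [exists (z (S s) t); now apply Hz|].
  change (Derive (fun x => z s x) t) with (Derive (z s) t).
  rewrite (is_derive_unique _ _ _ (Hz s t Hs Ht)); simpl; ring.
Qed.

Lemma Rabs_z_le s t : (s < n)%nat -> Rabs (z s t) <= sqrt (energy t).
Proof.
  intros Hs; rewrite <- sqrt_Rsqr_abs; apply sqrt_le_1_alt; unfold Rsqr.
  replace (z s t * z s t) with (z s t ^ 2) by ring.
  apply (rsum_ge_term n (fun s => z s t ^ 2)); [intros; apply pow2_ge_0|exact Hs].
Qed.

Lemma Rabs_z_top_le t : in_ival l r t -> Rabs (z n t) <= ratio t * sqrt (energy t).
Proof.
  intros Ht.
  assert (Hzn : z n t = - rsum n (fun s => A s t / A n t * z s t)).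
  { assert (H := Hode t Ht); simpl in H.
    rewrite (rsum_ext _ _ (fun s => / A n t * (A s t * z s t))), rsum_scal
      by (intros; unfold Rdiv; ring).
    field_simplify_eq; [lra|exact (HAn t Ht)]. }
  rewrite Hzn, Rabs_Ropp; apply (Rle_trans _ _ _ (rsum_abs _ _)).
  unfold ratio; rewrite Rmult_comm, <- rsum_scal; apply rsum_le; intros s Hs.
  rewrite Rabs_mult, Rmult_comm; apply Rmult_le_compat_r; [apply Rabs_pos|].
  now apply Rabs_z_le.
Qed.

Lemma Rabs_energy'_le t : in_ival l r t ->
  Rabs (energy' t) <= 2 * INR n * (1 + ratio t) * energy t.
Proof.
  intros Ht; apply (Rle_trans _ _ _ (rsum_abs _ _)).
  assert (HE : sqrt (energy t) * sqrt (energy t) = energy t)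
    by apply sqrt_sqrt, energy_nonneg.
  assert (Hratio : 0 <= ratio t) by (apply rsum_nonneg; intros; apply Rabs_pos).
  assert (Hsq := sqrt_pos (energy t)).
  replace (2 * INR n * (1 + ratio t) * energy t)
    with (rsum n (fun _ => 2 * (1 + ratio t) * energy t)) by (rewrite rsum_const; ring).
  apply rsum_le; intros s Hs.
  assert (H0 := Rabs_z_le s t Hs).
  assert (H1 : Rabs (z (S s) t) <= (1 + ratio t) * sqrt (energy t)).
  { destruct (Nat.eq_dec (S s) n) as [->|HSs].
    - assert (H := Rabs_z_top_le t Ht); nra.
    - assert (H := Rabs_z_le (S s) t ltac:(lia)); nra. }
  rewrite !Rabs_mult, (Rabs_right 2) by lra.
  assert (H2 := Rabs_pos (z s t)); assert (H3 := Rabs_pos (z (S s) t)).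
  rewrite <- HE; nra.
Qed.

Lemma continuous_ratio t : in_ival l r t -> continuous ratio t.
Proof.
  intros Ht; apply (continuous_rsum n (fun s u => Rabs (A s u / A n u))); intros s Hs.
  apply (continuous_Rabs_comp (fun u => A s u / A n u)).
  apply (continuous_mult (A s) (fun u => / A n u));
    [|apply continuous_Rinv_comp; [|apply HAn]]; try apply HA; auto; lia.
Qed.

Theorem companion_system_unique :
  in_ival l r t0 -> (forall s, (s < n)%nat -> z s t0 = 0) ->
  forall s t, (s < n)%nat -> in_ival l r t -> z s t = 0.
Proof.
  intros Ht0 Hz0 s t Hs Ht.
  assert (Henergy : energy t = 0).
  { apply (Gronwall_zero l r energy energy' (fun u => 2 * INR n * (1 + ratio u)) t0);
      try assumption.
    - apply rsum_zero; intros; rewrite Hz0 by assumption; ring.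
    - intros; apply energy_nonneg.
    - exact is_derive_energy.
    - intros u Hu; apply (continuous_mult (fun _ => 2 * INR n)); [apply continuous_const|].
      apply (continuous_plus (fun _ => 1)); [apply continuous_const|].
      now apply continuous_ratio.
    - exact Rabs_energy'_le. }
  assert (H := Rabs_z_le s t Hs); rewrite Henergy, sqrt_0 in H.
  apply Rabs_eq_0, Rle_antisym; [exact H|apply Rabs_pos].
Qed.

End CompanionSystem.

(** * Matching initial values *)

(* Induction on [m]: the unknowns [eta i * (w i - w m)] solve the smaller system for
   [u (S k) - w m * u k], and [eta m] then fixes the equation [k = 0]. *)
Lemma vandermonde_solvable m (w u : nat -> R) :
  (forall i j, (i < m)%nat -> (j < m)%nat -> i <> j -> w i <> w j) ->
  exists eta, forall k, (k < m)%nat -> rsum m (fun i => eta i * w i ^ k) = u k.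
Proof.
  revert u; induction m as [|m IH]; intros u Hw; [exists (fun _ => 0); intros; lia|].
  destruct (IH (fun k => u (S k) - w m * u k)) as [eta' Heta']; [intros; apply Hw; lia|].
  assert (Hwm : forall i, (i < m)%nat -> w i - w m <> 0)
    by (intros i Hi Hz; apply (Hw i m); lia || lra).
  exists (fun i => if Nat.ltb i m then eta' i / (w i - w m)
           else u 0%nat - rsum m (fun j => eta' j / (w j - w m))).
  assert (Hlow : forall g, rsum m (fun i => (if Nat.ltb i m then eta' i / (w i - w m)
           else u 0%nat - rsum m (fun j => eta' j / (w j - w m))) * g i)
           = rsum m (fun i => eta' i / (w i - w m) * g i)).
  { intros g; apply rsum_ext; intros i Hi; destruct (Nat.ltb_spec i m); [reflexivity|lia]. }
  intros k Hk; induction k as [|k IHk]; simpl rsum; rewrite Nat.ltb_irrefl, Hlow.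
  - rewrite (rsum_ext m _ (fun i => eta' i / (w i - w m))) by (intros; ring); ring.
  - rewrite (rsum_ext m _ (fun i => eta' i * w i ^ k + w m * (eta' i / (w i - w m) * w i ^ k)))
      by (intros i Hi; simpl; field; apply Hwm, Hi).
    rewrite rsum_plus, rsum_scal, Heta' by lia.
    assert (IH0 := IHk ltac:(lia)); simpl rsum in IH0; rewrite Nat.ltb_irrefl, Hlow in IH0.
    rewrite <- IH0; simpl; ring.
Qed.

Lemma isqrt_sum_interpolates n a eps t0 (v : nat -> R) :
  (forall i j, (i < n)%nat -> (j < n)%nat -> i <> j -> a i <> a j) ->
  (forall i, (i < n)%nat -> 0 < Dlt eps a i t0) ->
  exists xi, forall s, (s < n)%nat ->
    rsum n (fun i => xi i * isqrt_deriv (eps i) (a i) s t0) = v s.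
Proof.
  intros Hdist Hpos.
  destruct (vandermonde_solvable n (fun i => / (a i - t0)) (fun s => v s / poch (1/2) s))
    as [eta Heta].
  { intros i j Hi Hj Hij Hw; apply (Hdist i j Hi Hj Hij).
    apply Rinv_eq_reg in Hw; lra. }
  exists (fun i => eta i * sqrt (Dlt eps a i t0)); intros s Hs.
  assert (Hp := poch_half_pos s).
  rewrite (rsum_ext _ _ (fun i => poch (1/2) s * (eta i * (/ (a i - t0)) ^ s))), rsum_scal, Heta
    by (try exact Hs; intros i Hi; unfold isqrt_deriv; set (w := (/ (a i - t0)) ^ s);
        assert (Hsq : 0 < sqrt (Dlt eps a i t0)) by (apply sqrt_lt_R0, Hpos, Hi);
        unfold Dlt in *; field; lra).
  field; lra.
Qed.

Section Proposition6.

Variables (n : nat) (a eps : nat -> R) (l r : Rbar).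
Hypothesis Hpos : forall t, in_ival l r t -> forall i, (i < n)%nat -> 0 < Dlt eps a i t.

Lemma is_derive_isqrt_sum xi s t : in_ival l r t ->
  is_derive (fun u => rsum n (fun i => xi i * isqrt_deriv (eps i) (a i) s u)) t
    (rsum n (fun i => xi i * isqrt_deriv (eps i) (a i) (S s) t)).
Proof.
  intros Ht; apply (is_derive_rsum n (fun i u => xi i * isqrt_deriv (eps i) (a i) s u)).
  intros i Hi; apply is_derive_scal, is_derive_isqrt_deriv, Hpos; assumption.
Qed.

Lemma Derive_n_isqrt_sum xi s t : in_ival l r t ->
  Derive_n (fun u => rsum n (fun i => xi i / sqrt (Dlt eps a i u))) s t
  = rsum n (fun i => xi i * isqrt_deriv (eps i) (a i) s t).
Proof.
  revert t; induction s as [|s IH]; intros t Ht.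
  - apply rsum_ext; intros i _; unfold isqrt_deriv, Dlt; simpl; unfold Rdiv; ring.
  - simpl Derive_n at 1.
    rewrite (Derive_ext_loc _ (fun u => rsum n (fun i => xi i * isqrt_deriv (eps i) (a i) s u))).
    + apply is_derive_unique, is_derive_isqrt_sum, Ht.
    + apply (filter_imp (in_ival l r)); [exact IH|exact (in_ival_locally l r t Ht)].
Qed.

Lemma Op_coef_isqrt_sum xi t : in_ival l r t ->
  rsum (S n) (fun s => Op_coef n (Fpoly n a) s t *
    rsum n (fun i => xi i * isqrt_deriv (eps i) (a i) s t)) = 0.
Proof.
  intros Ht; rewrite rsum_mult_rsum; apply rsum_zero; intros i Hi.
  rewrite Op_coef_Fpoly_isqrt by (try apply Hpos; assumption); ring.
Qed.

Lemma Op_Fpoly_isqrt_sum xi t : in_ival l r t ->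
  Op n (Fpoly n a) (fun u => rsum n (fun i => xi i / sqrt (Dlt eps a i u))) t = 0.
Proof.
  intros Ht; rewrite OpE, <- (Op_coef_isqrt_sum xi t Ht).
  apply rsum_ext; intros s _; rewrite Derive_n_isqrt_sum by exact Ht; reflexivity.
Qed.

Lemma Derive_n_Fpoly_div_Dlt i t : (i < n)%nat -> in_ival l r t ->
  Derive_n (fun u => Fpoly n a u / Dlt eps a i u) n t = 0.
Proof.
  intros Hi Ht.
  rewrite (Derive_n_ext_loc _ (fun u => / eps i * Fpoly_drop n a i u)), Derive_n_scal_l.
  - rewrite (proj2 (Fpoly_drop_deg n a i Hi)) by lia; ring.
  - apply (filter_imp (in_ival l r)); [|exact (in_ival_locally l r t Ht)].
    intros u Hu; assert (H := Hpos u Hu i Hi); unfold Dlt in *.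
    assert (eps i <> 0) by (intros He; rewrite He in H; lra).
    assert (u - a i <> 0) by (intros Hz; rewrite Hz in H; lra).
    rewrite (Fpoly_extract n a i u Hi); field; auto.
Qed.

Lemma Op_coef_top_neq0 t : in_ival l r t -> Op_coef n (Fpoly n a) n t <> 0.
Proof.
  intros Ht; unfold Op_coef; rewrite Nat.sub_diag; simpl.
  assert (HF : Fpoly n a t <> 0).
  { apply rprod_neq0; intros i Hi Hz.
    assert (H := Hpos t Ht i Hi); unfold Dlt in H; rewrite Hz in H; lra. }
  assert (Hp := poch_half_pos n).
  apply Rmult_integral_contrapositive; split; [lra|apply Rinv_neq_0_compat; lra].
Qed.

Section Residual.

Variables (y : R -> R) (xi : nat -> R).
Hypothesis Hy : forall t, in_ival l r t -> forall k, (k <= n)%nat -> ex_derive_n y k t.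
Hypothesis Hode : forall t, in_ival l r t -> Op n (Fpoly n a) y t = 0.

Let residual s u := Derive_n y s u - rsum n (fun i => xi i * isqrt_deriv (eps i) (a i) s u).

Lemma is_derive_residual s t : (s < n)%nat -> in_ival l r t ->
  is_derive (residual s) t (residual (S s) t).
Proof.
  intros Hs Ht; apply (@is_derive_minus R_AbsRing R_NormedModule).
  - apply Derive_correct, (Hy t Ht (S s)); lia.
  - apply is_derive_isqrt_sum, Ht.
Qed.

Lemma Op_coef_residual t : in_ival l r t ->
  rsum (S n) (fun s => Op_coef n (Fpoly n a) s t * residual s t) = 0.
Proof.
  intros Ht.
  rewrite (rsum_ext _ _ (fun s => Op_coef n (Fpoly n a) s t * Derive_n y s t + -1 *
    (Op_coef n (Fpoly n a) s t * rsum n (fun i => xi i * isqrt_deriv (eps i) (a i) s t))))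
    by (intros; unfold residual; ring).
  rewrite rsum_plus, rsum_scal, <- OpE, Hode, Op_coef_isqrt_sum by exact Ht; ring.
Qed.

Lemma residual_vanishes t0 : (1 <= n)%nat -> in_ival l r t0 ->
  (forall s, (s < n)%nat -> residual s t0 = 0) ->
  forall t, in_ival l r t -> residual 0 t = 0.
Proof.
  intros Hn Ht0 Hinit t Ht.
  apply (companion_system_unique n l r (Op_coef n (Fpoly n a)) residual t0); auto.
  - intros s u _ _; apply continuous_Op_coef, (proj1 (Fpoly_deg n a)).
  - exact Op_coef_top_neq0.
  - exact is_derive_residual.
  - exact Op_coef_residual.
Qed.

End Residual.

Lemma Op_Fpoly_general_solution y : (1 <= n)%nat ->
  (forall i j, (i < n)%nat -> (j < n)%nat -> i <> j -> a i <> a j) ->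
  Rbar_lt l r ->
  (forall t, in_ival l r t -> forall k, (k <= n)%nat -> ex_derive_n y k t) ->
  (forall t, in_ival l r t -> Op n (Fpoly n a) y t = 0) ->
  exists xi, forall t, in_ival l r t -> y t = rsum n (fun i => xi i / sqrt (Dlt eps a i t)).
Proof.
  intros Hn Hdist Hlr Hy Hode.
  destruct (in_ival_inhabited l r Hlr) as [t0 Ht0].
  destruct (isqrt_sum_interpolates n a eps t0 (fun s => Derive_n y s t0) Hdist (Hpos t0 Ht0))
    as [xi Hxi].
  exists xi; intros t Ht.
  assert (Hinit : forall s, (s < n)%nat ->
    Derive_n y s t0 - rsum n (fun i => xi i * isqrt_deriv (eps i) (a i) s t0) = 0)
    by (intros s Hs; rewrite Hxi by exact Hs; ring).
  assert (H := residual_vanishes y xi Hy Hode t0 Hn Ht0 Hinit t Ht).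
  assert (Hx := Derive_n_isqrt_sum xi 0 t Ht); simpl in H, Hx; lra.
Qed.

End Proposition6.

Theorem proposition6
  (n : nat) (a eps : nat -> R) (l r : Rbar)
  (Hn : (1 <= n)%nat)
  (Hdist : forall i j, (i < n)%nat -> (j < n)%nat -> i <> j -> a i <> a j)
  (Heps : forall i, (i < n)%nat -> eps i = 1 \/ eps i = -1)
  (Hlr : Rbar_lt l r)
  (Hpos : forall t, in_ival l r t -> forall i, (i < n)%nat -> 0 < Dlt eps a i t) :
  (forall xi : nat -> R, forall t, in_ival l r t ->
     let x := fun u => rsum n (fun i => xi i / sqrt (Dlt eps a i u)) in
     Op n (Fpoly n a) x t
       = rsum n (fun i => xi i * sqrt (Dlt eps a i t) / INR (Factorial.fact n)
                   * Derive_n (fun u => Fpoly n a u / Dlt eps a i u) n t)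
     /\ rsum n (fun i => xi i * sqrt (Dlt eps a i t) / INR (Factorial.fact n)
                   * Derive_n (fun u => Fpoly n a u / Dlt eps a i u) n t) = 0)
  /\
  (forall y : R -> R,
     (forall t, in_ival l r t -> forall k, (k <= n)%nat -> ex_derive_n y k t) ->
     (forall t, in_ival l r t -> Op n (Fpoly n a) y t = 0) ->
     exists xi : nat -> R, forall t, in_ival l r t ->
       y t = rsum n (fun i => xi i / sqrt (Dlt eps a i t))).
Proof.
  split.
  - intros xi t Ht x.
    assert (Hrhs : rsum n (fun i => xi i * sqrt (Dlt eps a i t) / INR (Factorial.fact n)
                     * Derive_n (fun u => Fpoly n a u / Dlt eps a i u) n t) = 0).
    { apply rsum_zero; intros i Hi.
      rewrite (Derive_n_Fpoly_div_Dlt n a eps l r Hpos i t Hi Ht); ring. }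
    rewrite Hrhs; split; [exact (Op_Fpoly_isqrt_sum n a eps l r Hpos xi t Ht)|reflexivity].
  - intros y Hy Hode.
    exact (Op_Fpoly_general_solution n a eps l r Hpos y Hn Hdist Hlr Hy Hode).
Qed.
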